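(* Let $(Q,\infty)$, $\alpha$, $V$, $0\in I$, $L$, $\tilde Q$, $\tilde V$, $\zeta\in\mathbb R^{I}$ and $\eta\in(\mathbb Q_{>0})^{L}$ be as in the context. If a representation $\tilde\rho\in\mathrm{Rep}_{\tilde Q}(\tilde V)$ is $(\zeta,\eta)$-semistable, then the linear map $\tilde V_{(0,L)}\to V_{0}$ (attached to the arrow $(0,L)\to 0$) is an isomorphism, and the linear maps $\tilde V_{(0,k)}\to\tilde V_{(0,k+1)}$ (attached to the arrows $(0,k)\to(0,k+1)$) are injective for all $k=1,\dots,L-1$.
   Context: A framed quiver is a quiver with relations $Q=(Q_0,Q_1,Q_2)$ (vertices $Q_0$; arrows $Q_1$, an arrow $a$ going from $\mathrm{out}(a)$ to $\mathrm{in}(a)$; $Q_2$ a finite set of relations, each a linear combination of paths with common beginning $\mathrm{out}(l)$ and common ending $\mathrm{in}(l)$) together with a vertex $\infty\in Q_0$; put $I=Q_0\setminus\{\infty\}$ and assume $\mathrm{out}(l),\mathrm{in}(l)\in I$ for all $l\in Q_2$. A representation of a quiver with relations on a graded vector space is a collection of linear maps $B_a$, one for each arrow, satisfying the relations. Fix a finite-dimensional $Q_0$-graded vector space $V=\bigoplus_{v\in Q_0}V_v$ with $\dim V_\infty=1$ and put $\alpha_v=\dim V_v$, $\dim V=\sum_{v\in Q_0}\dim V_v$. Fix $0\in I$ and an integer $L\ge\alpha_0$. The enhanced quiver $\tilde Q$ has vertex set $\tilde Q_0=Q_0\sqcup\{(0,k)\mid k=1,\dots,L\}$, arrow set $Q_1$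 together with arrows $(0,k)\to(0,k+1)$ for $k=1,\dots,L-1$ and one arrow $(0,L)\to 0$, and relations $Q_2$. Let $\tilde V=V\oplus\bigoplus_{k=1}^{L}\tilde V_{(0,k)}$ be a $\tilde Q_0$-graded vector space with $\dim\tilde V_{(0,1)}\le1$, $\dim\tilde V_{(0,L)}=\alpha_0$, and $\dim\tilde V_{(0,k-1)}\le\dim\tilde V_{(0,k)}\le\dim\tilde V_{(0,k-1)}+1$ for $k=2,\dots,L-1$. For $\zeta\in\mathbb R^I$ put $\zeta_\infty=-\sum_{i\in I}\zeta_i\alpha_i$. For $\eta=(\eta_1,\dots,\eta_L)\in(\mathbb Q_{>0})^L$ and a $\tilde Q_0$-graded subspace $\tilde S=S\oplus\bigoplus_k\tilde S_{(0,k)}$ (with $S$ its $Q_0$-graded part) define $\mu_{(\zeta,\eta)}(\tilde S)=\dfrac{\sum_{v\in Q_0}\zeta_v\dim S_v+\sum_{k=1}^{L}\eta_k\dim\tilde S_{(0,k)}}{\sum_{v\in Q_0}\dim S_v}$. A representation $\tilde\rho$ of $\tilde Q$ on $\tilde V$ is $(\zeta,\eta)$-semistable if every nonzero proper sub-representation $\tilde S$ satisfies $\mu_{(\zeta,\eta)}(\tilde S)\le\mu_{(\zeta,\eta)}(\tilde V)$, where this inequality is understood in the cleared-denominator form $\big(\sum_{v}\zeta_v\dim S_v+\sum_k\eta_k\dim\tilde S_{(0,k)}\big)\dim V-\big(\sum_k\eta_k\dim\tilde V_{(0,k)}\big)\sum_v\dim S_v\le0$ (equivalent to the slope inequality when $\sum_v\dim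 S_v>0$). *)

From HB Require Import structures.
From mathcomp Require Import all_boot all_order all_algebra.
From mathcomp Require Import reals.

Set Implicit Arguments.
Unset Strict Implicit.
Unset Printing Implicit Defensive.

Import Order.TTheory GRing.Theory Num.Theory.
Local Open Scope ring_scope.

(* A representation on a V-graded space with dims d assigns to each     *)
(* arrow a a linear map F^(d (src a)) -> F^(d (tgt a)), encoded as a    *)
(* matrix acting on row vectors (v |-> v *m B a).                       *)
Section Quiver.
Variable F : fieldType.
Variables (V A : finType) (src tgt : A -> V) (d : V -> nat).

Definition quiver_rep := forall a : A, 'M[F]_(d (src a), d (tgt a)).

(* The linear map attached to a path p = [:: a1; ...; an] (a1 first)
   from vertex s to vertex t; it is 0 if p is not a path from s to t. *)
Fixpoint path_mx (B : quiver_rep) (s t : V) (p : seq A) : 'M[F]_(d s, d t) :=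
  match p with
  | [::] => if s == t then conform_mx 0 (1%:M : 'M[F]_(d s)) else 0
  | a :: p' => if src a == s then conform_mx 0 (B a) *m path_mx B (tgt a) t p'
               else 0
  end.

Definition rel_holds (B : quiver_rep) (s t : V) (terms : seq (F * seq A)) :=
  \sum_(c <- terms) c.1 *: path_mx B s t c.2 = 0.

(* V-graded subspaces S_v <= F^(d v) (row spaces of square matrices),
   and sub-representations: subspaces stable under all arrow maps. *)
Definition graded_subspace := forall v : V, 'M[F]_(d v).

Definition is_subrep (B : quiver_rep) (S : graded_subspace) :=
  forall a : A, (S (src a) *m B a <= S (tgt a))%MS.

End Quiver.

(* The enhanced quiver tilde Q of a quiver Q = (Q0, Q1, outQ, inQ)     *)
(* with chosen vertex o (= "0") and integer L.                          *)
(* Vertices: Q0 + 'I_L, where inr k (k = 0..L-1) stands for (0, k+1).   *)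
(* Arrows:   Q1 + 'I_L, where inr k stands for the arrow out of (0,k+1):*)
(*   (0,k+1) -> (0,k+2) if k+1 < L, and (0,L) -> 0 if k+1 = L.          *)
Section Enhanced.
Variables (Q0 Q1 : finType) (outQ inQ : Q1 -> Q0) (o : Q0) (L : nat).

Definition evert : finType := (Q0 + 'I_L)%type.
Definition earrow : finType := (Q1 + 'I_L)%type.

Definition esrc (x : earrow) : evert :=
  match x with inl a => inl (outQ a) | inr k => inr k end.

Definition etgt (x : earrow) : evert :=
  match x with
  | inl a => inl (inQ a)
  | inr k => match (insub k.+1 : option 'I_L) with
             | Some j => inr j
             | None => inl o
             end
  end.

End Enhanced.
Arguments esrc {Q0 Q1} outQ L.
Arguments etgt {Q0 Q1} inQ o L.
Arguments evert Q0 L : clear implicits.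
Arguments earrow Q1 L : clear implicits.

Section Stability.
Variables (F : fieldType) (R : realType).
Variables (Q0 Q1 : finType) (outQ inQ : Q1 -> Q0) (o inf : Q0) (L : nat).
Variable dt : evert Q0 L -> nat.
Variables (zeta : Q0 -> R) (eta : 'I_L -> rat).

Local Notation erep := (quiver_rep F (esrc outQ L) (etgt inQ o L) dt).

Definition satisfies_rels (Q2 : finType) (rsrc rtgt : Q2 -> Q0)
  (rterms : Q2 -> seq (F * seq Q1)) (B : erep) :=
  forall l : Q2, rel_holds B (inl (rsrc l)) (inl (rtgt l))
    [seq (c.1, [seq inl a | a <- c.2]) | c <- rterms l].

(* zeta extended to Q0 by zeta_inf = - sum_(i in I) zeta_i alpha_i,
   where I = Q0 \ {inf} and alpha_v = dim V_v = dt (inl v);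
   the value of zeta at inf is irrelevant. *)
Definition zeta_ext (v : Q0) : R :=
  if v == inf then - \sum_(i : Q0 | i != inf) zeta i * (dt (inl i))%:R
  else zeta v.

Definition dimV : nat := \sum_(v : Q0) dt (inl v).

(* cleared-denominator form of mu(S) <= mu(tilde V) *)
Definition slope_le (S : graded_subspace F dt) : Prop :=
  ((\sum_(v : Q0) zeta_ext v * (\rank (S (inl v)))%:R
     + \sum_(k : 'I_L) ratr (eta k) * (\rank (S (inr k)))%:R) * dimV%:R
   - (\sum_(k : 'I_L) ratr (eta k) * (dt (inr k))%:R)
       * (\sum_(v : Q0) \rank (S (inl v)))%:R <= 0)%R.

Definition semistable (B : erep) : Prop :=
  forall S : graded_subspace F dt,
    is_subrep B S ->
    (exists x, S x != 0) ->
    (exists x, ~~ row_full (S x)) ->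
    slope_le S.

End Stability.

From HB Require Import structures.
From mathcomp Require Import all_boot all_order all_algebra.
From mathcomp Require Import reals.

Set Implicit Arguments.
Unset Strict Implicit.
Unset Printing Implicit Defensive.

Import Order.TTheory GRing.Theory Num.Theory.
Local Open Scope ring_scope.

(* The kernel of the arrow leaving a framing vertex (0,k), placed at (0,k) and
   zero elsewhere, is a sub-representation, since (0,k) is the source of no
   other arrow.  It has no component on Q, so its slope has denominator 0 and
   numerator eta_k dim(ker) > 0: semistability forces the kernel to vanish.
   For the last arrow (0,L) -> 0 the dimensions agree, so injective already
   means bijective. *)

Lemma row_free_full_eqdim (F : fieldType) (m n : nat) (A : 'M[F]_(m, n)) :
  m = n -> row_free A -> row_full A.
Proof. by move=> mn /eqP rkA; rewrite /row_full rkA mn. Qed.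

Section PointSubspace.
Variable F : fieldType.
Variables (V A : finType) (src tgt : A -> V) (d : V -> nat).

Definition point_subspace (v : V) (K : 'M[F]_(d v)) : graded_subspace F d :=
  fun w => if v == w then conform_mx 0 K else 0.

Lemma point_subspace_id v (K : 'M[F]_(d v)) : point_subspace K v = K.
Proof. by rewrite /point_subspace eqxx conform_mx_id. Qed.

Lemma point_subspace_neq v (K : 'M[F]_(d v)) w :
  w != v -> point_subspace K w = 0.
Proof. by rewrite eq_sym /point_subspace => /negbTE ->. Qed.

Lemma kermx_point_subrep (B : quiver_rep F src tgt d) (a0 : A) :
  (forall a, src a = src a0 -> a = a0) ->
  is_subrep B (point_subspace (kermx (B a0))).
Proof.
move=> a0_only a; have [/a0_only -> | a_other] := eqVneq (src a) (src a0).
  by rewrite point_subspace_id mulmx_ker sub0mx.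
by rewrite point_subspace_neq // mul0mx sub0mx.
Qed.

End PointSubspace.

Section EnhancedQuiver.
Variables (Q0 Q1 : finType) (outQ inQ : Q1 -> Q0) (o : Q0) (L : nat).

Lemma esrc_framing (k : 'I_L) (x : earrow Q1 L) :
  esrc outQ L x = esrc outQ L (inr k) -> x = inr k.
Proof. by case: x => [a|j] //= [->]. Qed.

Lemma etgt_last (k : 'I_L) : k.+1 = L -> etgt inQ o L (inr k) = inl o.
Proof. by move=> kL; rewrite /= insubN // kL ltnn. Qed.

End EnhancedQuiver.

Section Semistability.
Variables (F : fieldType) (R : realType).
Variables (Q0 Q1 : finType) (outQ inQ : Q1 -> Q0) (o inf : Q0) (L : nat).
Variable dt : evert Q0 L -> nat.
Variables (zeta : Q0 -> R) (eta : 'I_L -> rat).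
Hypothesis dt_inf : dt (inl inf) = 1%N.
Hypothesis eta_gt0 : forall k, 0 < eta k.

Lemma dimV_gt0 : (0 < dimV dt)%N.
Proof. by rewrite /dimV (bigD1 inf) //= dt_inf. Qed.

Lemma framing_subspace_not_slope_le (S : graded_subspace F dt) (k : 'I_L) :
  (forall v, S (inl v) = 0) -> S (inr k) != 0 -> ~ slope_le inf zeta eta S.
Proof.
move=> S_Q0 Sk_neq0; rewrite /slope_le.
have -> : \sum_(v : Q0) \rank (S (inl v)) = 0%N.
  by rewrite big1 // => v _; rewrite S_Q0 mxrank0.
rewrite mulr0 subr0 big1 ?add0r => [|v _]; last by rewrite S_Q0 mxrank0 mulr0.
apply/negP; rewrite -ltNge pmulr_lgt0 ?ltr0n ?dimV_gt0 //.
rewrite (bigD1 k) //=; apply: ltr_pwDl.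
  by rewrite pmulr_lgt0 ?ltr0q // ltr0n lt0n mxrank_eq0.
by apply: sumr_ge0 => j _; rewrite mulr_ge0 // ler0q ltW.
Qed.

Lemma semistable_row_free (B : quiver_rep F (esrc outQ L) (etgt inQ o L) dt) :
  semistable inf zeta eta B -> forall k : 'I_L, row_free (B (inr k)).
Proof.
move=> ssB k; rewrite -kermx_eq0; apply/negP => /negP kerB_neq0.
pose S := point_subspace (kermx (B (inr k)) : 'M_(dt (inr k))).
have S_Q0 v : S (inl v) = 0 by rewrite /S point_subspace_neq.
have S_k : S (inr k) = kermx (B (inr k)) by rewrite /S point_subspace_id.
apply: (framing_subspace_not_slope_le S_Q0 (k := k)); first by rewrite S_k.
apply: ssB.
- by apply: (kermx_point_subrep B (a0 := inr k)) => a; apply: esrc_framing.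
- by exists (inr k); rewrite S_k.
- by exists (inl inf); rewrite S_Q0 /row_full mxrank0 dt_inf.
Qed.

End Semistability.

Theorem lemma3p1 (F : fieldType) (R : realType)
  (Q0 Q1 Q2 : finType) (outQ inQ : Q1 -> Q0)
  (rsrc rtgt : Q2 -> Q0) (rterms : Q2 -> seq (F * seq Q1))
  (inf o : Q0) (L : nat) (dt : evert Q0 L -> nat)
  (zeta : Q0 -> R) (eta : 'I_L -> rat)
  (B : quiver_rep F (esrc outQ L) (etgt inQ o L) dt) :
  (forall l : Q2, rsrc l != inf /\ rtgt l != inf) ->
  o != inf ->
  dt (inl inf) = 1%N ->
  (0 < L)%N ->
  (dt (inl o) <= L)%N ->
  (forall k : 'I_L, k = 0%N :> nat -> (dt (inr k) <= 1)%N) ->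
  (forall k : 'I_L, k.+1 = L -> dt (inr k) = dt (inl o)) ->
  (forall j k : 'I_L, k = j.+1 :> nat -> (k.+1 < L)%N ->
     (dt (inr j) <= dt (inr k) <= (dt (inr j)).+1)%N) ->
  (forall k : 'I_L, 0 < eta k) ->
  satisfies_rels rsrc rtgt rterms B ->
  semistable inf zeta eta B ->
  (forall k : 'I_L, k.+1 = L -> row_free (B (inr k)) && row_full (B (inr k)))
  /\ (forall k : 'I_L, (k.+1 < L)%N -> row_free (B (inr k))).
Proof.
move=> _ _ dt_inf _ _ _ dt_last _ eta_gt0 _ ssB.
have B_free := semistable_row_free dt_inf eta_gt0 ssB.
split=> [k kL|k _]; last exact: B_free.
rewrite B_free; apply: row_free_full_eqdim (B_free k).
by rewrite (etgt_last _ _ kL) dt_last.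
Qed.
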